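(* Let $t\in\{0,\dots,T\}$, and let $\hat\sigma_t:\mathcal{M}_t\to\hat{\mathcal{P}}_t$, $\hat\sigma_{t+1}:\mathcal{M}_{t+1}\to\hat{\mathcal{P}}_{t+1}$ with $\hat\Pi_t=\hat\sigma_t(M_t)$, $\hat\Pi_{t+1}=\hat\sigma_{t+1}(M_{t+1})$. Suppose (a) there are a function $\hat f_t:\hat{\mathcal{P}}_t\times\mathcal{U}_t\times\mathcal{Y}_{t+1}\to\hat{\mathcal{P}}_{t+1}$ and $L_{\hat f_t}\ge0$ with $\eta(\hat f_t(\hat\pi^1,u,y^1),\hat f_t(\hat\pi^2,u,y^2))\le L_{\hat f_t}(\eta(\hat\pi^1,\hat\pi^2)+\eta(y^1,y^2))$ for all arguments, and $\hat\sigma_{t+1}(m_{t+1})=\hat f_t(\hat\sigma_t(m_t),u_t,y_{t+1})$ whenever $m_{t+1}$ consists of $m_t,u_t,y_{t+1}$; (b) there is $\delta_t^{\mathrm{ob}}\ge0$ with $\mathcal{H}([[Y_{t+1}|m_t,u_t]],[[Y_{t+1}|\hat\sigma_t(m_t),u_t]])\le\delta_t^{\mathrm{ob}}$ for all $m_t\in[[M_t]]$, $u_t\in[[U_t]]$; and (c) there is $\lambda_t^{\mathrm{ob}}\ge0$ with $\mathcal{H}([[Y_{t+1}|\hat\pi_t^1,u_t]],[[Y_{t+1}|\hat\pi_t^2,u_t]])\le\lambda_t^{\mathrm{ob}}\eta(\hat\pi_t^1,\hat\pi_t^2)$ for all $\hat\pi_t^1,\hat\pi_t^2\in[[\hat\Pi_t]]$,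 $u_t\in[[U_t]]$. Then there is $\lambda_t\ge0$ with $\mathcal{H}([[\hat\Pi_{t+1}|\hat\pi_t^1,u_t]],[[\hat\Pi_{t+1}|\hat\pi_t^2,u_t]])\le\lambda_t\,\eta(\hat\pi_t^1,\hat\pi_t^2)$ for all $\hat\pi_t^1,\hat\pi_t^2\in[[\hat\Pi_t]]$, $u_t\in[[U_t]]$.
   Context: Uncertain variables: fix a sample space $\Omega$; an uncertain variable with values in a set $\mathcal{X}$ is a map $X:\Omega\to\mathcal{X}$, with marginal range $[[X]]:=\{X(\omega):\omega\in\Omega\}$; uncertain variables are independent if their joint range is the product of their marginal ranges. Hausdorff distance: for nonempty subsets $\mathcal{A},\mathcal{B}$ of a metric space $(\mathcal{S},\eta)$, $\mathcal{H}(\mathcal{A},\mathcal{B}):=\max\{\sup_{a\in\mathcal{A}}\inf_{b\in\mathcal{B}}\eta(a,b),\sup_{b\in\mathcal{B}}\inf_{a\in\mathcal{A}}\eta(a,b)\}$. System: horizon $T\in\mathbb{N}$. For $t=0,\dots,T$ there are independent disturbances $W_t\in\mathcal{W}_t$, actions $U_t\in\mathcal{U}_t$ taking values in a given set $[[U_t]]\subseteq\mathcal{U}_t$, observations $Y_0=h_0(W_0)$, $Y_{t+1}=h_{t+1}(W_{0:t},U_{0:t})$; $\mathcal{U}_t,\mathcal{W}_t,\mathcal{Y}_t$ are bounded subsets of a metric space $(\mathcal{S},\eta)$ and $\hat{\mathcal{P}}_t$ are bounded metric spaces (metric also denoted $\eta$). The memory is $M_t=(Y_{0:t},U_{0:t-1})\in\mathcal{M}_t:=\prod_{\ell=0}^t\mathcal{Y}_\ell\times\prod_{\ell=0}^{t-1}\mathcal{U}_\ell$.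 Strategy-independent ranges: for $m_t=(y_{0:t},u_{0:t-1})$ let $\mathcal{W}(m_t)$ be the set of $w_{0:t}\in\prod_{\ell=0}^t[[W_\ell]]$ with $y_0=h_0(w_0)$ and $y_\ell=h_\ell(w_{0:\ell-1},u_{0:\ell-1})$ for $\ell=1,\dots,t$. Let $[[M_t]]$ be the set of such $m_t$ with $u_\ell\in[[U_\ell]]$ and $\mathcal{W}(m_t)\neq\emptyset$. For $m_t\in[[M_t]]$, $u_t\in[[U_t]]$: $[[Y_{t+1}|m_t,u_t]]:=\{h_{t+1}(w_{0:t},u_{0:t}):w_{0:t}\in\mathcal{W}(m_t)\}$, $[[M_{t+1}|m_t,u_t]]:=\{(m_t,u_t,y_{t+1}):y_{t+1}\in[[Y_{t+1}|m_t,u_t]]\}$. With $\hat\Pi_t=\hat\sigma_t(M_t)$: $[[\hat\Pi_t]]:=\hat\sigma_t([[M_t]])$, $[[M_t|\hat\pi_t]]:=\{m_t\in[[M_t]]:\hat\sigma_t(m_t)=\hat\pi_t\}$, $[[\hat\Pi_{t+1}|m_t,u_t]]:=\{\hat\sigma_{t+1}(m_{t+1}):m_{t+1}\in[[M_{t+1}|m_t,u_t]]\}$, and for $Z\in\{Y_{t+1},\hat\Pi_{t+1}\}$, $[[Z|\hat\pi_t,u_t]]:=\bigcup_{m_t\in[[M_t|\hat\pi_t]]}[[Z|m_t,u_t]]$. *)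

From mathcomp Require Import all_boot all_order all_algebra.
From mathcomp Require Import all_classical all_reals.
From mathcomp Require Import ereal.
Set Implicit Arguments. Unset Strict Implicit. Unset Printing Implicit Defensive.
Import Order.TTheory GRing.Theory Num.Theory.
Local Open Scope classical_set_scope.
Local Open Scope ring_scope.

Section Defs.
Variable R : realType.

Definition is_metric (X : Type) (d : X -> X -> R) : Prop :=
  [/\ forall x y, 0 <= d x y,
      forall x y, d x y = 0 <-> x = y,
      forall x y, d x y = d y x &
      forall x y z, d x z <= d x y + d y z].

Definition bounded_set (X : Type) (d : X -> X -> R) (A : set X) : Prop :=
  exists B : R, forall x y, A x -> A y -> d x y <= B.

Definition bounded_space (X : Type) (d : X -> X -> R) : Prop :=
  bounded_set d setT.

Definition hausdorff (X : Type) (d : X -> X -> R) (A B : set X) : \bar R :=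
  maxe (ereal_sup [set ereal_inf [set (d a b)%:E | b in B] | a in A])
       (ereal_sup [set ereal_inf [set (d a b)%:E | a in A] | b in B]).
End Defs.

Section System.
(* S is the ambient metric space; sequences are lists of points of S.
   A memory m_t = (y_{0:t}, u_{0:t-1}) is a pair (ys, us) of sequences. *)
Variable S : Type.

Definition seq_in (A : nat -> set S) (s : seq S) : Prop :=
  forall (x0 : S) (i : nat), (i < size s)%N -> A i (nth x0 s i).

Definition in_Mspace (Yc Uc : nat -> set S) (t : nat) (m : seq S * seq S) : Prop :=
  [/\ size m.1 = t.+1, size m.2 = t, seq_in Yc m.1 & seq_in Uc m.2].

(* W(m_t).  h0 = h_0 ; hn k w u = h_{k+1}(w_{0:k}, u_{0:k}). *)
Definition Wm (Wr : nat -> set S) (h0 : S -> S) (hn : nat -> seq S -> seq S -> S)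
  (t : nat) (m : seq S * seq S) : set (seq S) :=
  [set w | [/\ size w = t.+1, seq_in Wr w,
     (forall x0 : S, nth x0 m.1 0%N = h0 (nth x0 w 0%N)) &
     (forall (x0 : S) (l : nat), (l < t)%N ->
        nth x0 m.1 l.+1 = hn l (take l.+1 w) (take l.+1 m.2))]].

Definition Mrange (Yc Uc Ur Wr : nat -> set S) h0 hn (t : nat) : set (seq S * seq S) :=
  [set m | [/\ in_Mspace Yc Uc t m, seq_in Ur m.2 & Wm Wr h0 hn t m !=set0]].

Definition Ynext (Wr : nat -> set S) h0 hn (t : nat) (m : seq S * seq S) (u : S)
  : set S :=
  [set hn t w (rcons m.2 u) | w in Wm Wr h0 hn t m].

Definition Mnext (Wr : nat -> set S) h0 hn (t : nat) (m : seq S * seq S) (u : S)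
  : set (seq S * seq S) :=
  [set (rcons m.1 y, rcons m.2 u) | y in Ynext Wr h0 hn t m u].

Variable P0 P1 : Type.

Definition Pirange (Yc Uc Ur Wr : nat -> set S) h0 hn (t : nat)
  (sig : seq S * seq S -> P0) : set P0 :=
  sig @` Mrange Yc Uc Ur Wr h0 hn t.

Definition Mpi (Yc Uc Ur Wr : nat -> set S) h0 hn (t : nat)
  (sig : seq S * seq S -> P0) (p : P0) : set (seq S * seq S) :=
  [set m | Mrange Yc Uc Ur Wr h0 hn t m /\ sig m = p].

Definition Pinext (Wr : nat -> set S) h0 hn (t : nat)
  (sig1 : seq S * seq S -> P1) (m : seq S * seq S) (u : S) : set P1 :=
  sig1 @` Mnext Wr h0 hn t m u.

Definition Ynext_pi (Yc Uc Ur Wr : nat -> set S) h0 hn (t : nat)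
  (sig : seq S * seq S -> P0) (p : P0) (u : S) : set S :=
  \bigcup_(m in Mpi Yc Uc Ur Wr h0 hn t sig p) Ynext Wr h0 hn t m u.

Definition Pinext_pi (Yc Uc Ur Wr : nat -> set S) h0 hn (t : nat)
  (sig : seq S * seq S -> P0) (sig1 : seq S * seq S -> P1) (p : P0) (u : S)
  : set P1 :=
  \bigcup_(m in Mpi Yc Uc Ur Wr h0 hn t sig p) Pinext Wr h0 hn t sig1 m u.
End System.

From mathcomp Require Import all_boot all_order all_algebra.
From mathcomp Require Import all_classical all_reals.
From mathcomp Require Import ereal.
From mathcomp Require Import ring.
Set Implicit Arguments. Unset Strict Implicit. Unset Printing Implicit Defensive.
Import Order.TTheory GRing.Theory Num.Theory.
Local Open Scope classical_set_scope.
Local Open Scope ring_scope.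

(* Under (a), [[Pi_{t+1} | pi, u]] is the image of [[Y_{t+1} | pi, u]] under
   y |-> f(pi, u, y).  A map that is L-Lipschitz in (pi, y) sends two sets at
   Hausdorff distance at most r to sets at Hausdorff distance at most
   L (eta(pi1, pi2) + r), so (c) gives the claim with
   lambda = L_f (1 + lambda^ob). *)

Section PointSetDistance.
Variables (R : realType) (X : Type) (d : X -> X -> R).

Definition dist_to (x : X) (B : set X) : \bar R :=
  ereal_inf [set (d x b)%:E | b in B].

Lemma dist_to_le_hausdorff A B x : A x -> (dist_to x B <= hausdorff d A B)%E.
Proof.
move=> Ax; rewrite /hausdorff le_max; apply/orP; left.
by apply: ereal_sup_ubound; exists x.
Qed.

Lemma dist_to_lt x B (r e : R) :
  (dist_to x B <= r%:E)%E -> 0 < e -> exists2 b, B b & d x b < r + e.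
Proof.
move=> xBr e_gt0.
have /ereal_inf_lt[_ [b Bb <-]] : (dist_to x B < (r + e)%:E)%E.
  by apply: le_lt_trans xBr _; rewrite lte_fin ltrDl.
by rewrite lte_fin => xb_lt; exists b.
Qed.

Hypothesis dC : forall x y, d x y = d y x.

Lemma hausdorffC A B : hausdorff d A B = hausdorff d B A.
Proof.
rewrite /hausdorff maxC; congr maxe; congr ereal_sup;
  by apply: eq_imagel => x _; congr ereal_inf; apply: eq_imagel => y _; rewrite dC.
Qed.

Lemma hausdorff_le A B (r : \bar R) :
  (forall a, A a -> dist_to a B <= r)%E -> (forall b, B b -> dist_to b A <= r)%E ->
  (hausdorff d A B <= r)%E.
Proof.
move=> ABr BAr; rewrite /hausdorff ge_max; apply/andP; split;
  apply: ge_ereal_sup => _ [x Ax <-]; first exact: ABr.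
by rewrite (eq_imagel (f' := fun a => (d x a)%:E)) => [|a _]; [exact: BAr | rewrite dC].
Qed.

End PointSetDistance.

Section LipschitzImage.
Variables (R : realType) (X Y : Type) (d : X -> X -> R) (d' : Y -> Y -> R) (L c : R).
Hypothesis L_ge0 : 0 <= L.

Lemma dist_to_image_le (g1 g2 : X -> Y) x B (r : R) :
  (forall x', B x' -> d' (g1 x) (g2 x') <= L * (c + d x x')) ->
  (dist_to d x B <= r%:E)%E -> (dist_to d' (g1 x) (g2 @` B) <= (L * (c + r))%:E)%E.
Proof.
move=> g_lip xBr; apply/lee_addgt0Pr => e e_gt0.
have L1_gt0 : 0 < L + 1 by rewrite ltr_wpDl.
have [x' Bx' xx'_lt] := dist_to_lt xBr (divr_gt0 e_gt0 L1_gt0).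
apply: le_trans (ereal_inf_lbound _) _; first by exists (g2 x') => //; exists x'.
rewrite -EFinD lee_fin; apply: le_trans (g_lip _ Bx') _.
have Le_le : L * (e / (L + 1)) <= e.
  by rewrite mulrA ler_pdivrMr // [L * e]mulrC ler_pM2l // lerDl.
apply: le_trans (ler_wpM2l L_ge0 (lerD (lexx c) (ltW xx'_lt))) _.
by rewrite addrA mulrDr lerD2l.
Qed.

Hypotheses (dC : forall x y, d x y = d y x) (d'C : forall x y, d' x y = d' y x).

Lemma hausdorff_image_le (g1 g2 : X -> Y) A B (r : R) :
  (forall x x', A x -> B x' -> d' (g1 x) (g2 x') <= L * (c + d x x')) ->
  (hausdorff d A B <= r%:E)%E ->
  (hausdorff d' (g1 @` A) (g2 @` B) <= (L * (c + r))%:E)%E.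
Proof.
move=> g_lip ABr; apply: hausdorff_le => //.
- move=> _ [x Ax <-]; apply: dist_to_image_le => [x' Bx'|]; first exact: g_lip.
  exact: le_trans (dist_to_le_hausdorff _ _ Ax) ABr.
- move=> _ [x' Bx' <-]; apply: (@dist_to_image_le g2 g1) => [x Ax|].
    by rewrite d'C dC; apply: g_lip.
  rewrite (hausdorffC dC) in ABr.
  exact: le_trans (dist_to_le_hausdorff _ _ Bx') ABr.
Qed.

End LipschitzImage.

Section ObservationUpdate.
Variables (S : Type) (Uc Ur Wc Wr Yc : nat -> set S).
Hypotheses (hUr : forall l, Ur l `<=` Uc l) (hWr : forall l, Wr l `<=` Wc l).
Variables (h0 : S -> S) (hn : nat -> seq S -> seq S -> S).
Hypothesis hnY : forall (k : nat) (w u : seq S), size w = k.+1 -> size u = k.+1 ->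
  seq_in Wc w -> seq_in Uc u -> Yc k.+1 (hn k w u).
Variable t : nat.

Lemma Ynext_sub_Yc m u :
  Mrange Yc Uc Ur Wr h0 hn t m -> Ur t u -> Ynext Wr h0 hn t m u `<=` Yc t.+1.
Proof.
move=> [[_ size_us _ us_in] _ _] Ur_u _ [w [size_w w_in _ _] <-].
apply: hnY => //; first by rewrite size_rcons size_us.
  by move=> x0 i lt_i; apply/hWr/w_in.
move=> x0 i; rewrite size_rcons nth_rcons size_us ltnS leq_eqVlt.
case: ltnP => [lt_it _|_]; first by apply: us_in; rewrite size_us.
by rewrite orbF => /eqP->; rewrite eqxx; apply: hUr.
Qed.

Lemma Ynext_pi_sub_Yc (P0 : Type) (sig : seq S * seq S -> P0) p u :
  Ur t u -> Ynext_pi Yc Uc Ur Wr h0 hn t sig p u `<=` Yc t.+1.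
Proof. by move=> Ur_u y [m [Mm _]]; apply: Ynext_sub_Yc. Qed.

Variables (P0 P1 : Type) (sig0 : seq S * seq S -> P0) (sig1 : seq S * seq S -> P1).
Variable f : P0 -> S -> S -> P1.
Hypothesis f_upd : forall m u y, in_Mspace Yc Uc t m -> Uc t u -> Yc t.+1 y ->
  sig1 (rcons m.1 y, rcons m.2 u) = f (sig0 m) u y.

Lemma Pinext_pi_image p u : Ur t u ->
  Pinext_pi Yc Uc Ur Wr h0 hn t sig0 sig1 p u =
  f p u @` Ynext_pi Yc Uc Ur Wr h0 hn t sig0 p u.
Proof.
move=> Ur_u; have Uc_u := hUr Ur_u.
apply/seteqP; split.
  move=> _ [m [Mm <-] [_ [y my <-] <-]]; have [Mm_in _ _] := Mm.
  by exists y; [exists m | rewrite f_upd //; apply: Ynext_sub_Yc my].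
move=> _ [y [m [Mm <-] my] <-]; have [Mm_in _ _] := Mm.
exists m => //; exists (rcons m.1 y, rcons m.2 u); first by exists y.
by rewrite f_upd //; apply: Ynext_sub_Yc my.
Qed.

End ObservationUpdate.

Theorem lemma3 (R : realType) (S : Type) (eta : S -> S -> R)
  (eta_metric : is_metric eta) (T : nat)
  (Uc Ur Wc Wr Yc : nat -> set S)
  (hUr : forall l, Ur l `<=` Uc l) (hWr : forall l, Wr l `<=` Wc l)
  (bU : forall l, bounded_set eta (Uc l)) (bW : forall l, bounded_set eta (Wc l))
  (bY : forall l, bounded_set eta (Yc l))
  (h0 : S -> S) (hn : nat -> seq S -> seq S -> S)
  (h0Y : forall w, Wc 0%N w -> Yc 0%N (h0 w))
  (hnY : forall (k : nat) (w u : seq S), size w = k.+1 -> size u = k.+1 ->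
          seq_in Wc w -> seq_in Uc u -> Yc k.+1 (hn k w u))
  (t : nat) (htT : (t <= T)%N)
  (P0 P1 : Type) (eta0 : P0 -> P0 -> R) (eta1 : P1 -> P1 -> R)
  (eta0_metric : is_metric eta0) (eta1_metric : is_metric eta1)
  (bP0 : bounded_space eta0) (bP1 : bounded_space eta1)
  (sig0 : seq S * seq S -> P0) (sig1 : seq S * seq S -> P1)
  (* (a) *)
  (f : P0 -> S -> S -> P1) (Lf : R) (Lf_ge0 : 0 <= Lf)
  (f_lip : forall p1 p2 u y1 y2, Uc t u -> Yc t.+1 y1 -> Yc t.+1 y2 ->
      eta1 (f p1 u y1) (f p2 u y2) <= Lf * (eta0 p1 p2 + eta y1 y2))
  (f_upd : forall m u y, in_Mspace Yc Uc t m -> Uc t u -> Yc t.+1 y ->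
      sig1 (rcons m.1 y, rcons m.2 u) = f (sig0 m) u y)
  (* (b) *)
  (dob : R) (dob_ge0 : 0 <= dob)
  (hb : forall m u, Mrange Yc Uc Ur Wr h0 hn t m -> Ur t u ->
      (hausdorff eta (Ynext Wr h0 hn t m u)
                     (Ynext_pi Yc Uc Ur Wr h0 hn t sig0 (sig0 m) u)
        <= dob%:E)%E)
  (* (c) *)
  (lob : R) (lob_ge0 : 0 <= lob)
  (hc : forall p1 p2 u,
      Pirange Yc Uc Ur Wr h0 hn t sig0 p1 -> Pirange Yc Uc Ur Wr h0 hn t sig0 p2 ->
      Ur t u ->
      (hausdorff eta (Ynext_pi Yc Uc Ur Wr h0 hn t sig0 p1 u)
                     (Ynext_pi Yc Uc Ur Wr h0 hn t sig0 p2 u)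
        <= (lob * eta0 p1 p2)%:E)%E) :
  exists lam : R, 0 <= lam /\
    forall p1 p2 u,
      Pirange Yc Uc Ur Wr h0 hn t sig0 p1 -> Pirange Yc Uc Ur Wr h0 hn t sig0 p2 ->
      Ur t u ->
      (hausdorff eta1 (Pinext_pi Yc Uc Ur Wr h0 hn t sig0 sig1 p1 u)
                      (Pinext_pi Yc Uc Ur Wr h0 hn t sig0 sig1 p2 u)
        <= (lam * eta0 p1 p2)%:E)%E.
Proof.
have [_ _ etaC _] := eta_metric; have [_ _ eta1C _] := eta1_metric.
exists (Lf * (1 + lob)); split; first by rewrite mulr_ge0 // addr_ge0.
move=> p1 p2 u Pp1 Pp2 Ur_u.
rewrite !(Pinext_pi_image hUr hWr h0 hnY f_upd) //.
have -> : Lf * (1 + lob) * eta0 p1 p2 = Lf * (eta0 p1 p2 + lob * eta0 p1 p2) by ring.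
apply: hausdorff_image_le => // [y1 y2 Yy1 Yy2|]; last exact: hc.
by apply: f_lip; [exact: hUr | exact: Ynext_pi_sub_Yc Yy1 | exact: Ynext_pi_sub_Yc Yy2].
Qed.
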